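(* Let $(Q_1,* )$ and $(Q_2,\cdot)$ be automorphic loops and let $\varphi:Q_1\to Q_2$ be a special half-isomorphism. If $\varphi$ has no GG-triple, then $\varphi$ is trivial, i.e. it is either an isomorphism or an anti-isomorphism.
   Context: A loop is a set with a binary operation in which all equations $ax=b$, $ya=b$ are uniquely solvable and which has a two-sided identity. For $a\in L$, $R_a:x\mapsto xa$, $L_a:x\mapsto ax$; the inner mapping group is the stabilizer of the identity in the group generated by all $R_a,L_a$. A loop is automorphic if every inner mapping is an automorphism. A half-isomorphism between loops $(L,* )$, $(L',\cdot)$ is a bijection $f$ with $f(x*y)\in\{f(x)\cdot f(y),f(y)\cdot f(x)\}$ for all $x,y\in L$; it is special if $f^{-1}$ is also a half-isomorphism, and trivial if it is an isomorphism or an anti-isomorphism ($f(x*y)=f(y)\cdot f(x)$ for all $x,y$). A GG-triple of a half-isomorphism $f$ is a triple $(x,y,z)$ of elements of $L$ such that $f(x*y)=f(x)\cdot f(y)\neq f(y)\cdot f(x)$ and $f(x*z)=f(z)\cdot f(x)\neq f(x)\cdot f(z)$. *)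

Definition is_loop {T : Type} (mul : T -> T -> T) (e : T) : Prop :=
  (forall a b : T, exists! x : T, mul a x = b) /\
  (forall a b : T, exists! y : T, mul y a = b) /\
  (forall x : T, mul e x = x /\ mul x e = x).

(* The multiplication group Mlt: the group of permutations generated by all
   L_a : x |-> a x and R_a : x |-> x a.  Every element is a finite composite
   of generators and their inverses; mlt f says f is such a composite. *)
Inductive mlt {T : Type} (mul : T -> T -> T) : (T -> T) -> Prop :=
  | mlt_id : mlt mul (fun x => x)
  | mlt_L (a : T) (f : T -> T) : mlt mul f -> mlt mul (fun x => mul a (f x))
  | mlt_R (a : T) (f : T -> T) : mlt mul f -> mlt mul (fun x => mul (f x) a)
  | mlt_Linv (a : T) (g f : T -> T) :
      (forall x, mul a (g x) = x) -> (forall x, g (mul a x) = x) ->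
      mlt mul f -> mlt mul (fun x => g (f x))
  | mlt_Rinv (a : T) (g f : T -> T) :
      (forall x, mul (g x) a = x) -> (forall x, g (mul x a) = x) ->
      mlt mul f -> mlt mul (fun x => g (f x)).

Definition inner_mapping {T : Type} (mul : T -> T -> T) (e : T) (f : T -> T) : Prop :=
  mlt mul f /\ f e = e.

(* Automorphic loop: every inner mapping is an automorphism (inner mappings
   are bijections, so it suffices that they are multiplicative). *)
Definition automorphic_loop {T : Type} (mul : T -> T -> T) (e : T) : Prop :=
  is_loop mul e /\
  forall f, inner_mapping mul e f -> forall x y, f (mul x y) = mul (f x) (f y).

Definition bijection {A B : Type} (f : A -> B) : Prop :=
  exists g : B -> A, (forall x, g (f x) = x) /\ (forall y, f (g y) = y).

Definition half_hom {A B : Type} (m1 : A -> A -> A) (m2 : B -> B -> B) (f : A -> B) : Prop :=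
  forall x y, f (m1 x y) = m2 (f x) (f y) \/ f (m1 x y) = m2 (f y) (f x).

Definition half_isomorphism {A B : Type} (m1 : A -> A -> A) (m2 : B -> B -> B) (f : A -> B) : Prop :=
  bijection f /\ half_hom m1 m2 f.

Definition special_half_isomorphism {A B : Type} (m1 : A -> A -> A) (m2 : B -> B -> B)
  (f : A -> B) : Prop :=
  half_isomorphism m1 m2 f /\
  exists g : B -> A, (forall x, g (f x) = x) /\ (forall y, f (g y) = y) /\
                     half_isomorphism m2 m1 g.

Definition is_isomorphism {A B : Type} (m1 : A -> A -> A) (m2 : B -> B -> B) (f : A -> B) : Prop :=
  bijection f /\ forall x y, f (m1 x y) = m2 (f x) (f y).

Definition is_anti_isomorphism {A B : Type} (m1 : A -> A -> A) (m2 : B -> B -> B) (f : A -> B) : Prop :=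
  bijection f /\ forall x y, f (m1 x y) = m2 (f y) (f x).

Definition trivial_half_iso {A B : Type} (m1 : A -> A -> A) (m2 : B -> B -> B) (f : A -> B) : Prop :=
  is_isomorphism m1 m2 f \/ is_anti_isomorphism m1 m2 f.

Definition GG_triple {A B : Type} (m1 : A -> A -> A) (m2 : B -> B -> B) (f : A -> B)
  (x y z : A) : Prop :=
  (f (m1 x y) = m2 (f x) (f y) /\ m2 (f x) (f y) <> m2 (f y) (f x)) /\
  (f (m1 x z) = m2 (f z) (f x) /\ m2 (f z) (f x) <> m2 (f x) (f z)).

From Stdlib Require Import Classical ClassicalEpsilon.

(* Call x a "hom point" of phi if phi(x*y) = phi(x)phi(y) for all y, and an
   "anti point" if phi(x*y) = phi(y)phi(x) for all y.  Without GG-triples every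
   x is a hom point or an anti point, and a hom point x commutes with an anti
   point y, both in Q1 and (through the inverse half-isomorphism) in Q2.
   Suppose phi is neither trivial: take a hom point a that is not an anti point
   and an anti point b that is not a hom point.  Then a fails to commute with
   some hom point y and b fails to commute with some anti point z.  The one
   fact needed about automorphic loops is that the commutant of an element t
   is the fixed set of the inner mapping T_t = L_t^-1 R_t, hence closed under
   left and right division.  If a*z is a hom point, b commutes with a and a*z,
   hence with z; if a*z is an anti point, y commutes with z and a*z, hence with
   a.  Either way we reach a contradiction.  Only Q1 needs to be automorphic. *)

Section Loop.
Variables (T : Type) (m : T -> T -> T) (e : T).
Hypothesis loop : is_loop m e.

Lemma loop_cancel_left (a x y : T) : m a x = m a y -> x = y.
Proof.
  destruct loop as [HL _]. intro E.
  destruct (HL a (m a y)) as [u [_ Hu]].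
  transitivity u; [symmetry; apply Hu, E | apply Hu; reflexivity].
Qed.

Lemma loop_cancel_right (a x y : T) : m x a = m y a -> x = y.
Proof.
  destruct loop as [_ [HR _]]. intro E.
  destruct (HR a (m y a)) as [u [_ Hu]].
  transitivity u; [symmetry; apply Hu, E | apply Hu; reflexivity].
Qed.

Lemma left_division_map (t : T) :
  exists g : T -> T, (forall x, m t (g x) = x) /\ (forall x, g (m t x) = x).
Proof.
  destruct loop as [HL _].
  assert (Hex : forall b, exists u, m t u = b).
  { intro b. destruct (HL t b) as [u [Hu _]]. exists u. exact Hu. }
  exists (fun b => proj1_sig (constructive_indefinite_description _ (Hex b))).
  assert (Hg : forall x, m t (proj1_sig (constructive_indefinite_description _ (Hex x))) = x).
  { intro x. exact (proj2_sig (constructive_indefinite_description _ (Hex x))). }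
  split; [exact Hg |].
  intro x. apply (loop_cancel_left t). apply Hg.
Qed.

Lemma endomorphism_fixed_div_left (F : T -> T)
  (HF : forall x y, F (m x y) = m (F x) (F y)) (a z : T) :
  F a = a -> F (m a z) = m a z -> F z = z.
Proof.
  intros Ha Haz. rewrite HF, Ha in Haz. exact (loop_cancel_left a _ _ Haz).
Qed.

Lemma endomorphism_fixed_div_right (F : T -> T)
  (HF : forall x y, F (m x y) = m (F x) (F y)) (a z : T) :
  F z = z -> F (m a z) = m a z -> F a = a.
Proof.
  intros Hz Haz. rewrite HF, Hz in Haz. exact (loop_cancel_right z _ _ Haz).
Qed.

Section Automorphic.
Hypothesis inner_aut :
  forall f, inner_mapping m e f -> forall x y, f (m x y) = m (f x) (f y).

Lemma commutant_inner_mapping (t : T) :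
  exists F, inner_mapping m e F /\ (forall s, F s = s <-> m t s = m s t).
Proof.
  destruct (left_division_map t) as [g [g_right g_left]].
  exists (fun x => g (m x t)). split; [split |].
  - apply (mlt_Linv m t g (fun x => m x t) g_right g_left).
    exact (mlt_R m t (fun x => x) (mlt_id m)).
  - destruct loop as [_ [_ Hid]]. destruct (Hid t) as [Het Hte].
    rewrite Het, <- Hte at 1. apply g_left.
  - intro s; split; intro H.
    + rewrite <- H at 1. rewrite g_right. reflexivity.
    + rewrite <- H. apply g_left.
Qed.

Lemma commutant_div_left (t a z : T) :
  m t a = m a t -> m t (m a z) = m (m a z) t -> m t z = m z t.
Proof.
  intros Ha Haz. destruct (commutant_inner_mapping t) as [F [HF Hfix]].
  apply Hfix, (endomorphism_fixed_div_left F (inner_aut F HF) a z); apply Hfix; assumption.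
Qed.

Lemma commutant_div_right (t a z : T) :
  m t z = m z t -> m t (m a z) = m (m a z) t -> m t a = m a t.
Proof.
  intros Hz Haz. destruct (commutant_inner_mapping t) as [F [HF Hfix]].
  apply Hfix, (endomorphism_fixed_div_right F (inner_aut F HF) a z); apply Hfix; assumption.
Qed.

End Automorphic.
End Loop.

Section HalfIsomorphism.
Variables (Q1 Q2 : Type) (m1 : Q1 -> Q1 -> Q1) (m2 : Q2 -> Q2 -> Q2).
Variables (phi : Q1 -> Q2) (psi : Q2 -> Q1).
Hypothesis psi_phi : forall x, psi (phi x) = x.
Hypothesis phi_psi : forall y, phi (psi y) = y.
Hypothesis phi_half : half_hom m1 m2 phi.
Hypothesis psi_half : half_hom m2 m1 psi.
Hypothesis no_GG : ~ (exists x y z, GG_triple m1 m2 phi x y z).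

Definition hom_at (x : Q1) : Prop := forall y, phi (m1 x y) = m2 (phi x) (phi y).
Definition anti_at (x : Q1) : Prop := forall y, phi (m1 x y) = m2 (phi y) (phi x).

(* A point that is neither would produce a GG-triple. *)
Lemma hom_or_anti (x : Q1) : hom_at x \/ anti_at x.
Proof.
  destruct (classic (hom_at x)) as [hx | nhx]; [now left | right].
  intro y. apply NNPP. intro ny. apply nhx. intro z. apply NNPP. intro nz.
  apply no_GG. exists x, y, z.
  destruct (phi_half x y) as [Ey | Ey]; [| contradiction].
  destruct (phi_half x z) as [Ez | Ez]; [contradiction |].
  split; split; try assumption; rewrite <- ?Ey, <- ?Ez; auto.
Qed.

(* A hom point commutes with an anti point, since phi(xy) = phi(yx). *)
Lemma hom_anti_commute (x y : Q1) : hom_at x -> anti_at y -> m1 x y = m1 y x.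
Proof.
  intros hx ky. rewrite <- (psi_phi (m1 x y)), <- (psi_phi (m1 y x)), hx, ky.
  reflexivity.
Qed.

(* ... and so do their images, by applying the half-isomorphism psi. *)
Lemma hom_anti_image_commute (x y : Q1) :
  hom_at x -> anti_at y -> m2 (phi x) (phi y) = m2 (phi y) (phi x).
Proof.
  intros hx ky. pose proof (hom_anti_commute x y hx ky) as C.
  rewrite <- (phi_psi (m2 (phi y) (phi x))).
  destruct (psi_half (phi y) (phi x)) as [E | E]; rewrite !psi_phi in E; rewrite E.
  - rewrite <- C. symmetry. apply hx.
  - symmetry. apply hx.
Qed.

Lemma hom_noncommuting_witness (a : Q1) :
  hom_at a -> ~ anti_at a -> exists y, hom_at y /\ m1 a y <> m1 y a.
Proof.
  intros ha na. apply not_all_ex_not in na as [y ny]. exists y.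
  destruct (hom_or_anti y) as [hy | ky].
  - split; [exact hy |]. intro C. apply ny. rewrite C. apply hy.
  - exfalso. apply ny. rewrite ha. apply hom_anti_image_commute; assumption.
Qed.

Lemma anti_noncommuting_witness (b : Q1) :
  anti_at b -> ~ hom_at b -> exists z, anti_at z /\ m1 b z <> m1 z b.
Proof.
  intros kb nb. apply not_all_ex_not in nb as [z nz]. exists z.
  destruct (hom_or_anti z) as [hz | kz].
  - exfalso. apply nz. rewrite kb. apply hom_anti_image_commute; assumption.
  - split; [exact kz |]. intro C. apply nz. rewrite C. apply kz.
Qed.

Lemma hom_everywhere_or_anti_everywhere :
  (forall t a z, m1 t a = m1 a t -> m1 t (m1 a z) = m1 (m1 a z) t -> m1 t z = m1 z t) ->
  (forall t a z, m1 t z = m1 z t -> m1 t (m1 a z) = m1 (m1 a z) t -> m1 t a = m1 a t) ->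
  (forall x, hom_at x) \/ (forall x, anti_at x).
Proof.
  intros div_left div_right.
  destruct (classic (forall x, hom_at x)) as [AH | nAH]; [now left |].
  destruct (classic (forall x, anti_at x)) as [AK | nAK]; [now right |].
  exfalso.
  apply not_all_ex_not in nAH as [b nb].
  apply not_all_ex_not in nAK as [a na].
  assert (ha : hom_at a) by (destruct (hom_or_anti a); tauto).
  assert (kb : anti_at b) by (destruct (hom_or_anti b); tauto).
  destruct (hom_noncommuting_witness a ha na) as [y [hy ny]].
  destruct (anti_noncommuting_witness b kb nb) as [z [kz nz]].
  destruct (hom_or_anti (m1 a z)) as [hw | kw].
  - (* b commutes with a and with a*z, hence with z *)
    apply nz, (div_left b a z); symmetry; apply hom_anti_commute; assumption.
  - (* y commutes with z and with a*z, hence with a *)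
    apply ny. symmetry. apply (div_right y a z); apply hom_anti_commute; assumption.
Qed.

End HalfIsomorphism.

Theorem proposition4p4 (Q1 Q2 : Type) (m1 : Q1 -> Q1 -> Q1) (e1 : Q1)
  (m2 : Q2 -> Q2 -> Q2) (e2 : Q2) (phi : Q1 -> Q2) :
  automorphic_loop m1 e1 -> automorphic_loop m2 e2 ->
  special_half_isomorphism m1 m2 phi ->
  ~ (exists x y z : Q1, GG_triple m1 m2 phi x y z) ->
  trivial_half_iso m1 m2 phi.
Proof.
  intros [loop1 aut1] _ [[bij phi_half] [psi [psi_phi [phi_psi [_ psi_half]]]]] no_GG.
  destruct (hom_everywhere_or_anti_everywhere Q1 Q2 m1 m2 phi psi
              psi_phi phi_psi phi_half psi_half no_GG
              (commutant_div_left Q1 m1 e1 loop1 aut1)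
              (commutant_div_right Q1 m1 e1 loop1 aut1)) as [AH | AK].
  - left. split; [exact bij |]. intros x y. apply AH.
  - right. split; [exact bij |]. intros x y. apply AK.
Qed.
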